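(* Let $P(z)=z^2-bz+c$ with $(b,c)\in\mathbb{C}^2$. Then $P$ has one root of modulus $1$ and the other root of modulus at most $1$ if and only if $|c|^2-\frac12|b|^2-\frac12|b^2-4c|+1=0$ and $|c|\leq1$. *)

From HB Require Import structures.
From mathcomp Require Import all_boot all_order all_algebra.
From mathcomp Require Export complex.
Set Implicit Arguments. Unset Strict Implicit. Unset Printing Implicit Defensive.
Import Order.TTheory GRing.Theory Num.Theory.
Local Open Scope ring_scope.

Definition quadP (R : rcfType) (b c : R[i]) : {poly R[i]} :=
  'X^2 - b *: 'X + c%:P.

From HB Require Import structures.
From mathcomp Require Import all_boot all_order all_algebra complex ring.
Set Implicit Arguments.
Unset Strict Implicit.
Unset Printing Implicit Defensive.

Import Order.TTheory GRing.Theory Num.Theory.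
Local Open Scope ring_scope.

(* Writing b = z1 + z2 and c = z1 z2 (Vieta), the parallelogram law
   |z1 + z2|^2 + |z1 - z2|^2 = 2 (|z1|^2 + |z2|^2) makes the left-hand side of
   the condition factor as (1 - |z1|^2)(1 - |z2|^2), while |c| = |z1||z2|.  So the
   condition says that one root lies on the unit circle and the product of the
   moduli is at most 1, i.e. the other root lies in the closed unit disc. *)

Section NormForm.

Variable C : numClosedFieldType.
Implicit Types b c z : C.

Lemma norm_form_vieta (z1 z2 : C) :
  `|z1 * z2| ^+ 2 - 2^-1 * `|z1 + z2| ^+ 2
    - 2^-1 * `|(z1 + z2) ^+ 2 - 4 * (z1 * z2)| + 1
  = (1 - `|z1| ^+ 2) * (1 - `|z2| ^+ 2).
Proof.
have -> : (z1 + z2) ^+ 2 - 4 * (z1 * z2) = (z1 - z2) ^+ 2 by ring.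
rewrite normrX !normCK !rmorphM rmorphD rmorphB /=.
have h2 : (2 : C) != 0 by rewrite pnatr_eq0.
by field.
Qed.

Lemma vieta_pair_exists b c : exists z1 z2, b = z1 + z2 /\ c = z1 * z2.
Proof.
set d := sqrtC (b ^+ 2 - 4 * c).
have hd : d ^+ 2 = b ^+ 2 - 4 * c by rewrite sqrtCK.
have h2 : (2 : C) != 0 by rewrite pnatr_eq0.
exists ((b + d) / 2), ((b - d) / 2); split; first by field.
transitivity ((b ^+ 2 - d ^+ 2) / 4); last by field.
by rewrite hd; field.
Qed.

Lemma unit_circle_factor (z1 z2 : C) :
  (1 - `|z1| ^+ 2) * (1 - `|z2| ^+ 2) = 0 -> `|z1| = 1 \/ `|z2| = 1.
Proof.
have norm_eq1 z : 1 - `|z| ^+ 2 = 0 -> `|z| = 1.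
  by move/eqP; rewrite subr_eq0 eq_sym pexpr_eq1 ?normr_ge0 // => /eqP.
by move/eqP; rewrite mulf_eq0 => /orP[] /eqP /norm_eq1; [left | right].
Qed.

End NormForm.

Lemma quadP_coef0 (R : rcfType) (b c : R[i]) : (quadP b c)`_0 = c.
Proof. by rewrite /quadP !(coefD, coefN, coefZ, coefXn, coefX, coefC) mulr0 subr0 add0r. Qed.

Lemma quadP_coef1 (R : rcfType) (b c : R[i]) : (quadP b c)`_1 = - b.
Proof. by rewrite /quadP !(coefD, coefN, coefZ, coefXn, coefX, coefC) mulr1 sub0r addr0. Qed.

Lemma quadP_factorE (R : rcfType) (b c z1 z2 : R[i]) :
  quadP b c = ('X - z1%:P) * ('X - z2%:P) <-> b = z1 + z2 /\ c = z1 * z2.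
Proof.
have -> : ('X - z1%:P) * ('X - z2%:P) = quadP (z1 + z2) (z1 * z2).
  by rewrite /quadP -mul_polyC polyCD polyCM; ring.
split=> [E | [-> ->] //].
split; last by rewrite -(quadP_coef0 b c) E quadP_coef0.
by apply: oppr_inj; rewrite -(quadP_coef1 b c) E quadP_coef1.
Qed.

Theorem proposition3p2 (R : rcfType) (b c : R[i]) :
  (exists z1 z2 : R[i],
      quadP b c = ('X - z1%:P) * ('X - z2%:P) /\ `|z1| = 1 /\ `|z2| <= 1)
  <->
  (`|c| ^+ 2 - 2^-1 * `|b| ^+ 2 - 2^-1 * `|b ^+ 2 - 4 * c| + 1 = 0
   /\ `|c| <= 1).
Proof.
split=> [[z1 [z2 [/quadP_factorE[-> ->] [n1 n2]]]] | [E hc]].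
  by rewrite norm_form_vieta n1 expr1n subrr mul0r normrM n1 mul1r.
have [z1 [z2 [Hb Hc]]] := vieta_pair_exists b c.
move: E hc; rewrite Hb Hc norm_form_vieta normrM => /unit_circle_factor[] n hc.
- exists z1, z2; split; first exact/quadP_factorE.
  by rewrite n mul1r in hc.
- exists z2, z1; split; first by apply/quadP_factorE; rewrite addrC mulrC.
  by rewrite n mulr1 in hc.
Qed.
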